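(* Let $\Omega$, $\Upsilon$, $\Gamma$ be finite sets, $n=|\Omega|$, and let $f\colon\Omega\to\Upsilon$ and $g\colon\Omega\to\Gamma$ be surjective. Let $V_\Omega=\mathbb{R}^\Omega$, let $V_\Upsilon\le V_\Omega$ be the subspace of vectors $v$ with $v(\omega)$ depending only on $f(\omega)$, and $V_\Gamma\le V_\Omega$ the subspace of vectors with $v(\omega)$ depending only on $g(\omega)$. Let $\mathcal{P}$, $\mathcal{Q}$, $\mathcal{R}$ be orthogonal decompositions of $V_\Omega$, $V_\Upsilon$, $V_\Gamma$, respectively, each containing the matrix $\mathbf{P}_0=\mathbf{Q}_0=\mathbf{R}_0=n^{-1}\mathbf{J}$. Write $\mathbf{I}_{\mathcal{Q}}=\sum_{\mathbf{Q}\in\mathcal{Q}}\mathbf{Q}$ and $\mathbf{I}_{\mathcal{R}}=\sum_{\mathbf{R}\in\mathcal{R}}\mathbf{R}$. Suppose $\mathcal{Q}$ is structure balanced in relation to $\mathcal{P}$, and let $\mathbf{P}\in\mathcal{P}\setminus\{\mathbf{P}_0\}$. Then the following are equivalent: (i) $(\mathbf{P}\vartriangleright\mathbf{Q})\mathbf{I}_{\mathcal{R}}=\mathbf{0}$ for all $\mathbf{Q}\in\mathcal{Q}$ with $\lambda_{\mathbf{PQ}}\neq0$; (ii) $\mathbf{QPR}=\mathbf{0}$ for all $\mathbf{Q}\in\mathcal{Q}$ and all $\mathbf{R}\in\mathcal{R}$; (iii) $\mathbf{I}_{\mathcal{Q}}\mathbf{P}\mathbf{I}_{\mathcal{R}}=\mathbf{0}$.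 Moreover, if these conditions hold for every $\mathbf{P}\in\mathcal{P}\setminus\{\mathbf{P}_0\}$, then $V_\Upsilon\cap V_0^\perp$ is orthogonal to $V_\Gamma\cap V_0^\perp$ (where $V_0$ is the space of constant vectors), and for every $\upsilon\in\Upsilon$ and $\gamma\in\Gamma$ there exists $\omega\in\Omega$ with $f(\omega)=\upsilon$ and $g(\omega)=\gamma$.
   Context: $\mathbf{J}$ is the $n\times n$ all-ones matrix. $V_\Omega$ carries the standard inner product; all matrices are $\Omega\times\Omega$. An orthogonal decomposition of a subspace $W\le V_\Omega$ is a finite set of nonzero symmetric idempotent matrices that are mutually orthogonal and whose sum is the orthogonal projector onto $W$. For projectors $\mathbf{A},\mathbf{B}$: $\mathbf{B}$ has first-order balance in relation to $\mathbf{A}$ if $\mathbf{BAB}=\lambda_{\mathbf{AB}}\mathbf{B}$ for a scalar $\lambda_{\mathbf{AB}}$ (efficiency factor); if $\lambda_{\mathbf{AB}}\ne0$, $\mathbf{A}\vartriangleright\mathbf{B}=\lambda_{\mathbf{AB}}^{-1}\mathbf{ABA}$. $\mathcal{Q}$ is structure balanced in relation to $\mathcal{P}$ if every $\mathbf{Q}\in\mathcal{Q}$ has first-order balance in relation to every $\mathbf{P}\in\mathcal{P}$, and $\mathbf{Q}_1\mathbf{P}\mathbf{Q}_2=\mathbf{0}$ for all $\mathbf{P}\in\mathcal{P}$ and all distinct $\mathbf{Q}_1,\mathbf{Q}_2\in\mathcal{Q}$. *)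

From HB Require Import structures.
From mathcomp Require Import all_boot all_order all_algebra.
Set Implicit Arguments. Unset Strict Implicit. Unset Printing Implicit Defensive.
Import Order.TTheory GRing.Theory Num.Theory.
Local Open Scope ring_scope.

Section Defs.
Variables (R : realFieldType) (n : nat).

Definition dotv (u v : 'cV[R]_n) : R := \sum_i u i 0 * v i 0.

Definition is_orth_proj_onto (P : 'M[R]_n) (W : 'cV[R]_n -> Prop) : Prop :=
  P^T = P /\ P *m P = P /\ (forall v, W v <-> P *m v = v).

(* orthogonal decomposition of W: a finite set (duplicate-free list) of nonzero
   symmetric idempotent, mutually orthogonal matrices summing to the projector onto W *)
Definition orth_decomp (D : seq 'M[R]_n) (W : 'cV[R]_n -> Prop) : Prop :=
  [/\ uniq D,
      (forall A, A \in D -> [/\ A != 0, A^T = A & A *m A = A]),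
      (forall A B, A \in D -> B \in D -> A != B -> A *m B = 0)
    & is_orth_proj_onto (\sum_(A <- D) A) W].

Definition eff_factor (A B : 'M[R]_n) (lam : R) : Prop :=
  B *m A *m B = lam *: B.

Definition first_order_balance (A B : 'M[R]_n) : Prop :=
  exists lam, eff_factor A B lam.

Definition tri (A B : 'M[R]_n) (lam : R) : 'M[R]_n :=
  lam^-1 *: (A *m B *m A).

Definition structure_balanced (Qs Ps : seq 'M[R]_n) : Prop :=
  (forall Q P, Q \in Qs -> P \in Ps -> first_order_balance P Q) /\
  (forall P Q1 Q2, P \in Ps -> Q1 \in Qs -> Q2 \in Qs -> Q1 != Q2 ->
     Q1 *m P *m Q2 = 0).

Definition P0 : 'M[R]_n := (n%:R)^-1 *: const_mx 1.

End Defs.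

Definition fibre_space (R : realFieldType) (n : nat) (T : Type) (f : 'I_n -> T)
  (v : 'cV[R]_n) : Prop := forall i j, f i = f j -> v i 0 = v j 0.

Definition perp_const (R : realFieldType) (n : nat) (u : 'cV[R]_n) : Prop :=
  forall w : 'cV[R]_n, (forall i j, w i 0 = w j 0) -> dotv u w = 0.

From HB Require Import structures.
From mathcomp Require Import all_boot all_order all_algebra.
Import Order.TTheory GRing.Theory Num.Theory.
Set Implicit Arguments. Unset Strict Implicit. Unset Printing Implicit Defensive.
Local Open Scope ring_scope.

(* If lambda_PQ = 0 then (PQ)^T (PQ) = QPQ = 0, so QP = 0 and Q drops out of
   (i) and (ii).  Otherwise QP I_R and (P |> Q) I_R = lambda^-1 P (QP I_R)
   vanish together, because Q (PQP I_R) = lambda QP I_R; this gives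
   (i) <-> (ii), and (ii) <-> (iii) holds because Q I_Q = Q and I_R R = R.
   If (iii) holds for every P <> P0, then I_Q I_R = sum_P I_Q P I_R = P0, so
   <u, v> = <u, P0 v> for u in V_Upsilon and v in V_Gamma.  This vanishes when u
   is orthogonal to the constants, while for the indicators of f^-1(y) and
   g^-1(c) it equals |f^-1(y)| |g^-1(c)| / n > 0, so these fibres meet. *)

Section OrthDecomp.
Variables (R : realFieldType) (n : nat).
Implicit Types (D E : seq 'M[R]_n) (W : 'cV[R]_n -> Prop) (A B M X : 'M[R]_n).

Lemma orth_decomp_sum_mulmx D W A :
  orth_decomp D W -> A \in D -> (\sum_(B <- D) B) *m A = A.
Proof.
case=> uD hD hO _ hA; rewrite mulmx_suml (bigD1_seq A) //=.
have [_ _ ->] := hD A hA.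
by rewrite big1_seq ?addr0 // => B /andP[nBA BD]; apply: hO.
Qed.

Lemma orth_decomp_mulmx_sum D W A :
  orth_decomp D W -> A \in D -> A *m (\sum_(B <- D) B) = A.
Proof.
case=> uD hD hO _ hA; rewrite mulmx_sumr (bigD1_seq A) //=.
have [_ _ ->] := hD A hA.
by rewrite big1_seq ?addr0 // => B /andP[nBA BD]; apply: hO; rewrite // eq_sym.
Qed.

Lemma orth_decomp_mulmx_sum_eq0 D W X :
  orth_decomp D W ->
  (forall B, B \in D -> X *m B = 0) <-> X *m (\sum_(B <- D) B) = 0.
Proof.
move=> hD; split=> [h | h B BD].
  by rewrite mulmx_sumr big1_seq // => B /andP[_ BD]; apply: h.
by rewrite -(orth_decomp_sum_mulmx hD BD) mulmxA h mul0mx.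
Qed.

Lemma orth_decomp_sum_mulmx_eq0 D W X :
  orth_decomp D W ->
  (forall A, A \in D -> A *m X = 0) <-> (\sum_(A <- D) A) *m X = 0.
Proof.
move=> hD; split=> [h | h A AD].
  by rewrite mulmx_suml big1_seq // => A /andP[_ AD]; apply: h.
by rewrite -(orth_decomp_mulmx_sum hD AD) -mulmxA h mulmx0.
Qed.

Lemma orth_decomp_sum_mulmx_sum_eq0 D E W W' X :
  orth_decomp D W -> orth_decomp E W' ->
  (forall A B, A \in D -> B \in E -> A *m X *m B = 0) <->
  (\sum_(A <- D) A) *m X *m (\sum_(B <- E) B) = 0.
Proof.
move=> hD hE; split=> [h | h A B AD BE].
  rewrite -mulmxA; apply/(orth_decomp_sum_mulmx_eq0 _ hD) => A AD.
  by rewrite mulmxA; apply/(orth_decomp_mulmx_sum_eq0 _ hE) => B BE; apply: h.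
have /(orth_decomp_sum_mulmx_eq0 _ hD)/(_ A AD) : 
    (\sum_(A <- D) A) *m (X *m \sum_(B <- E) B) = 0 by rewrite mulmxA.
by rewrite mulmxA => /(orth_decomp_mulmx_sum_eq0 _ hE)/(_ B BE).
Qed.

Lemma orth_decomp_sum_fixed D W v :
  orth_decomp D W -> W v -> (\sum_(A <- D) A) *m v = v.
Proof. by case=> _ _ _ [_ [_ hW]] /hW. Qed.

Lemma orth_decomp_full_sum D : orth_decomp D (fun _ => True) ->
  \sum_(A <- D) A = 1%:M.
Proof.
move=> hD; apply/matrixP => i j.
have /matrixP/(_ i 0) := orth_decomp_sum_fixed (v := col j 1%:M) hD I.
by rewrite colE mul1mx -colE !mxE andbT => ->.
Qed.

Lemma trmx_mul_self_eq0 X : X^T *m X = 0 -> X = 0.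
Proof.
move=> /matrixP XX0; apply/matrixP => i j; rewrite mxE.
have /eqP := XX0 j j; rewrite !mxE psumr_eq0 => [/allP/(_ i)|k _].
  by rewrite mem_index_enum mxE -expr2 sqrf_eq0 => /(_ isT)/eqP.
by rewrite mxE -expr2 sqr_ge0.
Qed.

Section Balance.
Variables (P Q : 'M[R]_n) (lam : R).
Hypotheses (PT : P^T = P) (PP : P *m P = P) (QT : Q^T = Q)
  (hlam : eff_factor P Q lam).

Lemma eff_factor0_mulmx : lam = 0 -> Q *m P = 0.
Proof.
move=> lam0; rewrite -[Q *m P]trmxK trmx_mul PT QT.
have PQ0 : (P *m Q)^T *m (P *m Q) = 0.
  by rewrite trmx_mul PT QT mulmxA -(mulmxA Q) PP hlam lam0 scale0r.
by rewrite (trmx_mul_self_eq0 PQ0) trmx0.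
Qed.

Lemma tri_mulmx_eq0 M : lam != 0 -> tri P Q lam *m M = 0 <-> Q *m P *m M = 0.
Proof.
move=> lam_neq0; rewrite /tri -scalemxAl.
split=> [/eqP | QPM0]; last by rewrite -!mulmxA (mulmxA Q P M) QPM0 !mulmx0 scaler0.
rewrite scaler_eq0 invr_eq0 (negbTE lam_neq0) /= => /eqP PQPM0.
have : Q *m (P *m Q *m P *m M) = lam *: (Q *m P *m M).
  by rewrite !mulmxA hlam -!scalemxAl.
by rewrite PQPM0 mulmx0 => /esym/eqP; rewrite scaler_eq0 (negbTE lam_neq0) => /eqP.
Qed.

End Balance.

Lemma first_order_balance_tri_mulmx_eq0 P Q M :
  P^T = P -> P *m P = P -> Q^T = Q -> first_order_balance P Q ->
  (forall lam, eff_factor P Q lam -> lam != 0 -> tri P Q lam *m M = 0) <->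
  Q *m P *m M = 0.
Proof.
move=> PT PP QT [lam hlam]; split=> [h | QPM0 mu hmu mu_neq0].
  have [lam0 | lam_neq0] := eqVneq lam 0.
    by rewrite (eff_factor0_mulmx PT PP QT hlam lam0) mul0mx.
  exact/(tri_mulmx_eq0 hlam _ lam_neq0)/h.
exact/(tri_mulmx_eq0 hmu _ mu_neq0).
Qed.

Lemma dotvE (u v : 'cV[R]_n) : dotv u v = (u^T *m v) 0 0.
Proof. by rewrite /dotv mxE; apply: eq_bigr => i _; rewrite mxE. Qed.

Lemma P0_mulmxE (v : 'cV[R]_n) i : (P0 R n *m v) i 0 = n%:R^-1 * \sum_k v k 0.
Proof. by rewrite mxE mulr_sumr; apply: eq_bigr => k _; rewrite !mxE mulr1. Qed.

Lemma dotv_P0 (u v : 'cV[R]_n) :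
  dotv u (P0 R n *m v) = n%:R^-1 * (\sum_i u i 0) * \sum_k v k 0.
Proof.
rewrite /dotv mulrAC mulr_sumr; apply: eq_bigr => i _.
by rewrite P0_mulmxE mulrC.
Qed.

Lemma perp_const_dotv_P0 (u v : 'cV[R]_n) :
  perp_const u -> dotv u (P0 R n *m v) = 0.
Proof. by move=> hu; apply: hu => i j; rewrite !P0_mulmxE. Qed.

End OrthDecomp.

Section BalancedDecompositions.
Variables (R : realFieldType) (n : nat) (U G : finType).
Variables (f : 'I_n -> U) (g : 'I_n -> G) (Ps Qs Rs : seq 'M[R]_n).
Hypotheses (hP : orth_decomp Ps (fun _ => True))
  (hQ : orth_decomp Qs (fibre_space f)) (hR : orth_decomp Rs (fibre_space g)).
Local Notation IQ := (\sum_(Q <- Qs) Q).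
Local Notation IR := (\sum_(S <- Rs) S).

Lemma tri_mulmx_sumR_eq0P P : structure_balanced Qs Ps -> P \in Ps ->
  (forall Q lam, Q \in Qs -> eff_factor P Q lam -> lam != 0 ->
     tri P Q lam *m IR = 0) <->
  (forall Q S, Q \in Qs -> S \in Rs -> Q *m P *m S = 0).
Proof.
move=> hbal PPs; have [_ /(_ P PPs)[_ PT PP] _ _] := hP.
have balQ Q : Q \in Qs ->
    (forall lam, eff_factor P Q lam -> lam != 0 -> tri P Q lam *m IR = 0) <->
    Q *m P *m IR = 0.
  move=> QQ; have [_ /(_ Q QQ)[_ QT _] _ _] := hQ.
  exact: first_order_balance_tri_mulmx_eq0 PT PP QT (hbal.1 Q P QQ PPs).
split=> [h Q S QQ | h Q lam QQ].
  by move: S; apply/(orth_decomp_mulmx_sum_eq0 _ hR)/(balQ Q QQ) => lam; apply: h.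
apply: (balQ Q QQ).2 lam.
by apply/(orth_decomp_mulmx_sum_eq0 _ hR) => S; apply: h.
Qed.

Hypotheses (hP0 : P0 R n \in Ps) (hQ0 : P0 R n \in Qs) (hR0 : P0 R n \in Rs).

Lemma sumQ_mulmx_sumR :
  (forall P, P \in Ps -> P != P0 R n -> IQ *m P *m IR = 0) -> IQ *m IR = P0 R n.
Proof.
move=> hall; have -> : IQ *m IR = \sum_(P <- Ps) IQ *m P *m IR.
  by rewrite -mulmx_suml -mulmx_sumr (orth_decomp_full_sum hP) mulmx1.
have [uPs _ _ _] := hP.
rewrite (bigD1_seq _ hP0 uPs) /= [X in _ + X]big1_seq ?addr0 => [|P /andP[P_neq0 PPs]].
  by rewrite (orth_decomp_sum_mulmx hQ hQ0) (orth_decomp_mulmx_sum hR hR0).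
exact: hall.
Qed.

Lemma dotv_fibre_spaces u v : IQ *m IR = P0 R n ->
  fibre_space f u -> fibre_space g v -> dotv u v = dotv u (P0 R n *m v).
Proof.
move=> IQIR /(orth_decomp_sum_fixed hQ) IQu /(orth_decomp_sum_fixed hR) IRv.
have [_ _ _ [IQT _]] := hQ.
rewrite -[in LHS]IQu -[in LHS]IRv !dotvE trmx_mul IQT.
by rewrite -!mulmxA (mulmxA IQ) IQIR.
Qed.

Definition fibre_indicator (T : eqType) (h : 'I_n -> T) (t : T) : 'cV[R]_n :=
  \col_i (h i == t)%:R.

Lemma fibre_indicator_fibre_space (T : eqType) (h : 'I_n -> T) t :
  fibre_space h (fibre_indicator h t).
Proof. by move=> i j hij; rewrite !mxE hij. Qed.

Lemma sum_fibre_indicator_gt0 (T : eqType) (h : 'I_n -> T) w :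
  0 < \sum_i fibre_indicator h (h w) i 0.
Proof.
rewrite (bigD1 w) //= mxE eqxx ltr_pwDl //.
by apply: sumr_ge0 => i _; rewrite mxE ler0n.
Qed.

Lemma fibres_meet_of_dotv_P0 :
  (forall u v, fibre_space f u -> fibre_space g v ->
     dotv u v = dotv u (P0 R n *m v)) ->
  (forall y, exists w, f w = y) -> (forall c, exists w, g w = c) ->
  forall y c, exists w, f w = y /\ g w = c.
Proof.
move=> dotv_fg f_surj g_surj y c.
have [w <-] := f_surj y; have [w' <-] := g_surj c.
have [x /andP[/eqP fx /eqP gx] | no_meet] :=
  pickP [pred x | (f x == f w) && (g x == g w')]; first by exists x.
have n_gt0 : (0 < n)%N by apply: leq_ltn_trans (ltn_ord w).
have := dotv_fg _ _ (fibre_indicator_fibre_space (h := f) (f w))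
  (fibre_indicator_fibre_space (h := g) (g w')).
rewrite dotv_P0 /dotv big1 => [/esym/eqP|i _]; last first.
  by rewrite !mxE -natrM mulnb [_ && _]no_meet.
rewrite !mulf_eq0 invr_eq0 pnatr_eq0 eqn0Ngt n_gt0.
by rewrite !gt_eqF ?sum_fibre_indicator_gt0.
Qed.

End BalancedDecompositions.

Theorem lemma1 (R : realFieldType) (n : nat) (U G : finType)
  (f : 'I_n -> U) (g : 'I_n -> G)
  (f_surj : forall u, exists w, f w = u) (g_surj : forall c, exists w, g w = c)
  (Ps Qs Rs : seq 'M[R]_n)
  (hP : orth_decomp Ps (fun _ => True))
  (hQ : orth_decomp Qs (fibre_space f))
  (hR : orth_decomp Rs (fibre_space g))
  (hP0 : P0 R n \in Ps) (hQ0 : P0 R n \in Qs) (hR0 : P0 R n \in Rs)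
  (hbal : structure_balanced Qs Ps) :
  let IQ := \sum_(Q <- Qs) Q in
  let IR := \sum_(S <- Rs) S in
  (forall P, P \in Ps -> P != P0 R n ->
     ((forall Q lam, Q \in Qs -> eff_factor P Q lam -> lam != 0 ->
          tri P Q lam *m IR = 0)
      <-> (forall Q S, Q \in Qs -> S \in Rs -> Q *m P *m S = 0))
     /\
     ((forall Q S, Q \in Qs -> S \in Rs -> Q *m P *m S = 0)
      <-> IQ *m P *m IR = 0))
  /\
  ((forall P, P \in Ps -> P != P0 R n -> IQ *m P *m IR = 0) ->
     (forall u v : 'cV[R]_n, fibre_space f u -> perp_const u ->
        fibre_space g v -> perp_const v -> dotv u v = 0)
     /\ (forall (y : U) (c : G), exists w, f w = y /\ g w = c)).
Proof.
move=> IQ IR; split=> [P PPs _ | hall].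
  split; first by apply: (tri_mulmx_sumR_eq0P hP hQ hR hbal PPs).
  exact: orth_decomp_sum_mulmx_sum_eq0 hQ hR.
have dotv_fg := dotv_fibre_spaces hQ hR (sumQ_mulmx_sumR hP hQ hR hP0 hQ0 hR0 hall).
split; last exact: fibres_meet_of_dotv_P0 dotv_fg f_surj g_surj.
by move=> u v fu pu fv _; rewrite dotv_fg // perp_const_dotv_P0.
Qed.
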